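(* Let $L$ be a finite simplicial complex, $M\in Z_k(L;\mathbb{Z}/2)$ a $k$-cycle (identified with its support) and $\Delta$ a $k$-simplex of $M$, and suppose $(M,\Delta)$ satisfies the $*$-condition: for all $k$-simplices $\sigma,\tau$ of $M$ such that every vertex of $\Delta$ lies in $\sigma\cup\tau$, one has $\sigma\cap\tau\subset\Delta$. Then the chain $\Omega\in C_{2k}(\mathcal C(D);\mathbb{Z}/2)$ defined below is a cycle.
   Context: For $L$ with vertex set $V$, $OL$ is the simplicial complex with vertex set $V\times\{\pm1\}$ (write $v^\pm=(v,\pm1)$) in which $\{(v_0,\varepsilon_0),\dots,(v_j,\varepsilon_j)\}$ spans a simplex iff the $v_i$ are distinct and $\{v_0,\dots,v_j\}$ is a simplex of $L$; $p:OL\to L$, $v^\pm\mapsto v$. For a simplicial complex $K$, $\mathcal C(K)$ is the quotient of the simplicial deleted product $\bigcup\{\sigma\times\tau:\sigma\cap\tau=\emptyset\}\subset K\times K$ by the factor-switching involution (a cell complex whose cells are unordered pairs $\{\sigma,\tau\}$ of disjoint simplices). Let $D$ be the full subcomplex of $OL$ spanned by the vertices $u^-$ for $u$ a vertex of $M$ and $u^+$ for $u$ a vertex of $\Delta$. $\Omega$ is the mod 2 chain which is the sum of all $2k$-cells $\{\sigma,\tau\}$ of $\mathcal C(D)$ ($\sigma,\tau$ $k$-simplices of $D$) such that $\sigma\cap\tau=\emptyset$ and every vertex of $\Delta$ lies in $p(\sigma)\cup p(\tau)$. *)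

From mathcomp Require Import all_boot.
Set Implicit Arguments. Unset Strict Implicit. Unset Printing Implicit Defensive.

Section Defs.
Variable V : finType.

Definition is_simplicial_complex (L : {set {set V}}) : Prop :=
  set0 \notin L /\
  forall s t : {set V}, s \in L -> t \subset s -> t != set0 -> t \in L.

(* M (identified with the support of a mod 2 chain) is a k-cycle of L:
   a set of k-simplices of L such that every (k-1)-face (nonempty, i.e.
   non-reduced homology) lies in an even number of them. *)
Definition is_kcycle (L : {set {set V}}) (k : nat) (M : {set {set V}}) : Prop :=
  M \subset L /\
  (forall s, s \in M -> #|s| = k.+1) /\
  (forall rho : {set V}, rho != set0 -> #|rho| = k ->
     ~~ odd #|[set s in M | rho \subset s]|).

Definition star_condition (M : {set {set V}}) (Delta : {set V}) : Prop :=
  forall sigma tau : {set V}, sigma \in M -> tau \in M ->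
    Delta \subset sigma :|: tau -> sigma :&: tau \subset Delta.

(* signed vertices v^+ = (v,true), v^- = (v,false) ; p = first projection *)
Definition proj (S : {set V * bool}) : {set V} := [set x.1 | x in S].

Definition vertM (M : {set {set V}}) : {set V} := \bigcup_(s in M) s.

(* Simplices of D: the full subcomplex of O(M) (M identified with its
   support, i.e. the subcomplex generated by its k-simplices) spanned by
   u^- (u a vertex of M) and u^+ (u a vertex of Delta). *)
Definition in_D (M : {set {set V}}) (Delta : {set V}) (S : {set V * bool}) : bool :=
  [&& S != set0,
      #|proj S| == #|S|,                       (* underlying vertices distinct *)
      [exists s in M, proj S \subset s]
    & [forall x in S, if x.2 then x.1 \in Delta else x.1 \in vertM M]].

(* Cells of C(D) are unordered pairs {sigma, tau}, represented as 2-element sets. *)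
Definition cell := {set {set V * bool}}.

Definition Omega (M : {set {set V}}) (Delta : {set V}) (k : nat) : {set cell} :=
  [set c : cell | [exists sigma : {set V * bool}, exists tau : {set V * bool},
     [&& c == [set sigma; tau], in_D M Delta sigma, in_D M Delta tau,
         #|sigma| == k.+1, #|tau| == k.+1, [disjoint sigma & tau]
       & Delta \subset proj sigma :|: proj tau]]].

Definition is_bface (c' c : cell) : bool :=
  [exists sigma in c, exists tau in c, exists x in sigma,
     [&& sigma != tau, sigma :\ x != set0 & c' == [set sigma :\ x; tau]]].

(* A mod 2 cellular chain (a set of cells) is a cycle: its boundary vanishes,
   i.e. every cell occurs as a face of an even number of its cells. *)
Definition is_cycle2 (Om : {set cell}) : Prop :=
  forall c' : cell, ~~ odd #|[set c in Om | is_bface c' c]|.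

End Defs.

From mathcomp Require Import all_boot.
Set Implicit Arguments. Unset Strict Implicit. Unset Printing Implicit Defensive.

(* A codimension-one face of a cell of Omega is {rho, tau} with |rho| = k and
   |tau| = k + 1, and its cofaces in Omega are the cells {rho + y, tau} for
   signed vertices y.  If some vertex w of Delta is missed by p(rho) u p(tau),
   then p(y) = w, and either both w^+ and w^- qualify or neither does.
   Otherwise the sign of y is forced: y is positive exactly when the negative
   copy of p(y) lies in tau, and the *-condition then puts p(y) in Delta.  So
   the cofaces correspond to the k-simplices of M containing p(rho), an even
   number since M is a cycle. *)

Lemma disjoint_setU1 (T : finType) x (A B : {set T}) :
  [disjoint x |: A & B] = (x \notin B) && [disjoint A & B].
Proof.
by rewrite -(disjointU1 x A B); apply: eq_disjoint => y; rewrite !inE.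
Qed.

Lemma forall_in_setU1 (T : finType) (P : pred T) x (A : {set T}) :
  [forall y in x |: A, P y] = P x && [forall y in A, P y].
Proof.
apply/forall_inP/andP => [H | [Px /forall_inP H] y].
  by split; [apply: H; rewrite setU11 | apply/forall_inP => y yA; apply: H; rewrite setU1r].
by rewrite in_setU1 => /predU1P [-> | /H].
Qed.

Lemma set2_inj_sizes (T : finType) (f : T -> nat) (a b a' b' : T) :
  f a = f a' -> f b = f b' -> f a != f b ->
  [set a; b] = [set a'; b'] -> a = a' /\ b = b'.
Proof.
move=> fa fb fab E; split.
  have : a \in [set a'; b'] by rewrite -E set21.
  by rewrite in_set2 => /orP [/eqP // | /eqP eab]; move: fab; rewrite fb -eab eqxx.
have : b \in [set a'; b'] by rewrite -E set22.
by rewrite in_set2 => /orP [/eqP eba | /eqP //]; move: fab; rewrite fa -eba eqxx.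
Qed.

Section PureFamily.
Variables (V : finType) (k : nat) (M : {set {set V}}).
Hypothesis card_M : forall s, s \in M -> #|s| = k.+1.

Lemma exists_superset_pure (S : {set V}) :
  #|S| = k.+1 -> [exists s in M, S \subset s] = (S \in M).
Proof.
move=> cardS; apply/exists_inP/idP => [[s sM Ss] | SM]; last by exists S; rewrite ?subxx.
suff -> : S = s by [].
by apply/eqP; rewrite eqEcard Ss card_M // cardS /=.
Qed.

Lemma card_star_vertices (r : {set V}) : #|r| = k ->
  #|[set v | v \notin r & v |: r \in M]| = #|[set s in M | r \subset s]|.
Proof.
move=> card_r; set N := [set v | _ & _].
have inj_N : {in N &, injective (fun v => v |: r)}.
  move=> v u; rewrite !inE => /andP [vr _] /andP [ur _] E.
  have : v \in u |: r by rewrite -E setU11.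
  by rewrite in_setU1 (negbTE vr) orbF => /eqP.
suff -> : [set s in M | r \subset s] = (fun v => v |: r) @: N.
  by rewrite card_in_imset.
apply/setP => s; rewrite inE; apply/andP/imsetP => [[sM rs] | [v]]; last first.
  by rewrite inE => /andP [_ vM] ->; split => //; apply: subsetUr.
have [v vs vr] : exists2 v, v \in s & v \notin r.
  apply/subsetPn; apply: contraTN isT => /subset_leq_card.
  by rewrite card_M // card_r ltnn.
have vr_s : v |: r = s.
  apply/eqP; rewrite eqEcard cardsU1 vr card_r card_M // leqnn andbT.
  by rewrite subUset sub1set vs.
by exists v; rewrite // inE vr vr_s sM.
Qed.

End PureFamily.

Section Omega.
Variables (V : finType) (k : nat) (M : {set {set V}}) (Delta : {set V}).
Hypothesis card_M : forall s, s \in M -> #|s| = k.+1.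
Hypothesis even_star_M : forall rho : {set V}, rho != set0 -> #|rho| = k ->
  ~~ odd #|[set s in M | rho \subset s]|.
Hypothesis star : star_condition M Delta.

Definition Omega_pair (s t : {set V * bool}) : bool :=
  [&& in_D M Delta s, in_D M Delta t, #|s| == k.+1, #|t| == k.+1,
      [disjoint s & t] & Delta \subset proj s :|: proj t].

Lemma Omega_pairC s t : Omega_pair s t = Omega_pair t s.
Proof.
rewrite /Omega_pair disjoint_sym setUC.
by do 2!case: (in_D _ _ _); do 2!case: (#|_| == _).
Qed.

Lemma OmegaP c :
  reflect (exists s t, c = [set s; t] /\ Omega_pair s t) (c \in Omega M Delta k).
Proof.
rewrite inE; apply: (iffP existsP) => [[s /existsP [t /andP [/eqP -> st]]] | [s [t [-> st]]]].
  by exists s, t.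
by exists s; apply/existsP; exists t; rewrite eqxx.
Qed.

Lemma proj_setU1 x (S : {set V * bool}) : proj (x |: S) = x.1 |: proj S.
Proof. exact: imsetU1. Qed.

Lemma mem_proj x (S : {set V * bool}) : x \in S -> x.1 \in proj S.
Proof. exact: imset_f. Qed.

Lemma Omega_pair_notin x (rho tau : {set V * bool}) :
  Omega_pair (x |: rho) tau -> x \notin tau.
Proof. by case/and5P=> _ _ _ _ /andP []; rewrite disjoint_setU1 => /andP []. Qed.

Lemma in_D_inj S : in_D M Delta S -> {in S &, injective fst}.
Proof. by case/and4P => _ /imset_injP. Qed.

Lemma proj_in_M S : in_D M Delta S -> #|S| = k.+1 -> proj S \in M.
Proof.
case/and4P => _ /eqP card_proj sub_M _ card_S.
by rewrite -(exists_superset_pure card_M) // card_proj.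
Qed.

Section Face.
Variables (x0 : V * bool) (rho tau : {set V * bool}).
Hypotheses (x0_rho : x0 \notin rho) (rho_neq0 : rho != set0)
  (pair0 : Omega_pair (x0 |: rho) tau).

Lemma card_rho : #|rho| = k.
Proof. by case/and5P: pair0 => _ _ /eqP; rewrite cardsU1 x0_rho => -[]. Qed.

Lemma in_D_tau : in_D M Delta tau.
Proof. by case/and3P: pair0. Qed.

Lemma card_tau : #|tau| = k.+1.
Proof. by case/and5P: pair0 => _ _ _ /eqP. Qed.

Lemma disjoint_rho_tau : [disjoint rho & tau].
Proof. by case/and5P: pair0 => _ _ _ _ /andP []; rewrite disjoint_setU1 => /andP []. Qed.

Lemma card_proj_rho : #|proj rho| = k.
Proof.
case/and5P: pair0 => /in_D_inj inj_s _ _ _ _; rewrite -card_rho.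
by apply/eqP/imset_injP => y z yr zr; apply: inj_s; rewrite setU1r.
Qed.

Lemma signs_rho : [forall y in rho, if y.2 then y.1 \in Delta else y.1 \in vertM M].
Proof. by case/and5P: pair0 => /and4P [_ _ _]; rewrite forall_in_setU1 => /andP []. Qed.

Lemma Omega_pair_setU1 x : x \notin rho ->
  Omega_pair (x |: rho) tau =
  [&& x.1 \notin proj rho, x.1 |: proj rho \in M, x.2 ==> (x.1 \in Delta),
      x \notin tau & Delta \subset x.1 |: (proj rho :|: proj tau)].
Proof.
move=> x_rho; rewrite /Omega_pair in_D_tau card_tau cardsU1 x_rho card_rho eqxx.
rewrite disjoint_setU1 disjoint_rho_tau proj_setU1 setUA andbT /=.
rewrite /in_D proj_setU1 !cardsU1 x_rho card_proj_rho card_rho.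
have [x_proj | x_proj] /= := boolP (x.1 \in proj rho); first by rewrite eqn_add2r andbF.
rewrite (exists_superset_pure card_M) ?cardsU1 ?x_proj ?card_proj_rho //.
rewrite forall_in_setU1 signs_rho andbT eqxx.
have [xM | ] //= := boolP (x.1 |: proj rho \in M); last by rewrite andbF.
have x_vert : x.1 \in vertM M by apply/bigcupP; exists (x.1 |: proj rho); rewrite ?setU11.
have -> : x |: rho != set0 by apply/set0Pn; exists x; rewrite setU11.
by case: x.2; rewrite ?x_vert.
Qed.

Definition coface_vertices : {set V * bool} := [set x | x \notin rho & Omega_pair (x |: rho) tau].

Lemma coface_vertices_uncovered w : w \in Delta -> w \notin proj rho -> w \notin proj tau ->
  ~~ odd #|coface_vertices|.
Proof.
move=> wD w_rho w_tau.
pose P := (w |: proj rho \in M) && (Delta \subset w |: (proj rho :|: proj tau)).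
have memX x : (x \in coface_vertices) = (x.1 == w) && P.
  rewrite inE; case: x => v b /=; have [-> | vw] /= := eqVneq v w.
    have w_rho' : (w, b) \notin rho by apply: contra w_rho; apply: mem_proj.
    have w_tau' : (w, b) \notin tau by apply: contra w_tau; apply: mem_proj.
    by rewrite w_rho' Omega_pair_setU1 //= w_rho w_tau' wD implybT.
  apply/negP => /andP [vb_rho]; rewrite Omega_pair_setU1 // => /and5P [_ _ _ _].
  move/subsetP/(_ w wD); rewrite in_setU1 in_setU (negbTE w_rho) (negbTE w_tau) orbF.
  by rewrite eq_sym (negbTE vw).
have [PT | PF] := boolP P.
  suff -> : coface_vertices = [set (w, true); (w, false)] by rewrite cards2 xpair_eqE eqxx.
  apply/setP => -[v b]; rewrite memX PT in_set2 andbT /= !xpair_eqE.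
  by case: b; rewrite /= ?andbT ?andbF ?orbF.
suff -> : coface_vertices = set0 by rewrite cards0.
by apply/setP => x; rewrite memX (negbTE PF) andbF inE.
Qed.

Lemma card_coface_vertices_covered : Delta \subset proj rho :|: proj tau ->
  #|coface_vertices| = #|[set v | v \notin proj rho & v |: proj rho \in M]|.
Proof.
move=> cover.
have memX x : (x \in coface_vertices) =
    [&& x.1 \notin proj rho, x.1 |: proj rho \in M, x.2 ==> (x.1 \in Delta) & x \notin tau].
  rewrite inE; have [x_proj | x_proj] /= := boolP (x.1 \in proj rho).
    by have [//|x_rho] := boolP (x \in rho); rewrite Omega_pair_setU1 // x_proj.
  have x_rho : x \notin rho by apply: contra x_proj; apply: mem_proj.
  rewrite x_rho Omega_pair_setU1 //= x_proj (subset_trans cover) ?andbT //.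
  exact: subsetUr.
have tau_over v : v \in Delta -> v \notin proj rho -> (v, true) \in tau \/ (v, false) \in tau.
  move=> vD v_rho; move/subsetP/(_ v vD): cover; rewrite in_setU (negbTE v_rho) /=.
  by case/imsetP => -[u []] u_tau /= ->; [left | right].
have inj_X : {in coface_vertices &, injective fst}.
  move=> [v b] [u c]; rewrite !memX /= => /and4P [v_rho _ vD v_tau] /and4P [_ _ uD u_tau] vu.
  subst u; case: b c vD uD v_tau u_tau => -[] //= vD uD v_tau u_tau.
    by case: (tau_over v vD v_rho) => h; [move: v_tau | move: u_tau]; rewrite h.
  by case: (tau_over v uD v_rho) => h; [move: u_tau | move: v_tau]; rewrite h.
rewrite -(card_in_imset inj_X); congr #|pred_of_set _|.
apply/setP => v; rewrite inE; apply/imsetP/andP => [[x] | [v_rho vM]].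
  by rewrite memX => /and4P [? ? _ _] ->.
have [vF_tau | vF_tau] := boolP ((v, false) \in tau); last first.
  by exists (v, false); rewrite // memX /= v_rho vM vF_tau.
exists (v, true) => //; rewrite memX /= v_rho vM /=.
have v_tau : v \in proj tau := mem_proj vF_tau.
apply/andP; split.
  apply: (subsetP (star vM (proj_in_M in_D_tau card_tau) _)).
    by apply: (subset_trans cover); rewrite -setUA subsetUr.
  by rewrite inE setU11 v_tau.
by apply/negP => vT_tau; move: (in_D_inj in_D_tau vT_tau vF_tau erefl).
Qed.

Lemma coface_vertices_even : ~~ odd #|coface_vertices|.
Proof.
have [cover | ] := boolP (Delta \subset proj rho :|: proj tau).
  rewrite card_coface_vertices_covered // (card_star_vertices card_M card_proj_rho).
  by apply: even_star_M; rewrite ?imset_eq0 ?card_proj_rho.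
case/subsetPn => w wD; rewrite in_setU negb_or => /andP [w_rho w_tau].
exact: (coface_vertices_uncovered wD).
Qed.

End Face.

Lemma bface_Omega c c' : c \in Omega M Delta k -> is_bface c' c ->
  exists (x : V * bool) (rho tau : {set V * bool}),
    [/\ x \notin rho, rho != set0, Omega_pair (x |: rho) tau,
        c = [set x |: rho; tau] & c' = [set rho; tau]].
Proof.
case/OmegaP => s1 [t1 [-> pair1]] /existsP [s /andP [s_c /existsP [t /andP [t_c]]]].
case/exists_inP => x xs /and3P [st rho_neq0 /eqP ->].
have [pair_st c_st] : Omega_pair s t /\ [set s1; t1] = [set s; t].
  move: s_c t_c st; rewrite !in_set2.
  do 2!case/orP => /eqP ->; rewrite ?eqxx // => _.
  by rewrite Omega_pairC setUC.
exists x, (s :\ x), t; rewrite setD11 setD1K //.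
Qed.

Lemma cofaces_Omega x0 (rho tau : {set V * bool}) :
  x0 \notin rho -> rho != set0 -> Omega_pair (x0 |: rho) tau ->
  [set c in Omega M Delta k | is_bface [set rho; tau] c] =
  (fun x => [set x |: rho; tau]) @: coface_vertices rho tau.
Proof.
move=> x0_rho rho_neq0 pair0; apply/setP => c; rewrite inE.
apply/andP/imsetP => [[c_Omega] | [y]].
  case/(bface_Omega c_Omega) => y [rho' [tau' [y_rho' _ pair' -> faces]]].
  have [<- <-] : rho' = rho /\ tau' = tau.
    apply: (set2_inj_sizes (f := fun S : {set V * bool} => #|S|)); rewrite -?faces //.
    - by rewrite (card_rho x0_rho pair0) (card_rho y_rho' pair').
    - by rewrite (card_tau pair0) (card_tau pair').
    - by rewrite (card_rho y_rho' pair') (card_tau pair') neq_ltn ltnSn.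
  by exists y; rewrite // inE y_rho'.
rewrite inE => /andP [y_rho pair_y] ->.
have y_tau := Omega_pair_notin pair_y.
split; first by apply/OmegaP; exists (y |: rho), tau.
apply/existsP; exists (y |: rho); rewrite set21 /=.
apply/existsP; exists tau; rewrite set22 /=.
apply/exists_inP; exists y; rewrite ?setU11 // setU1K // rho_neq0 eqxx andbT.
by rewrite andbT; apply: contraNneq y_tau => <-; rewrite setU11.
Qed.

Lemma coface_inj (rho tau : {set V * bool}) :
  {in coface_vertices rho tau &, injective (fun x => [set x |: rho; tau])}.
Proof.
move=> y z; rewrite !inE => /andP [y_rho /Omega_pair_notin y_tau] /andP [_ _] E.
have : y |: rho \in [set z |: rho; tau] by rewrite -E set21.
rewrite in_set2 => /orP [/eqP yz | /eqP y_eq]; last by move: y_tau; rewrite -y_eq setU11.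
have : y \in z |: rho by rewrite -yz setU11.
by rewrite in_setU1 (negbTE y_rho) orbF => /eqP.
Qed.

End Omega.

Theorem lemma4p3 (V : finType) (L : {set {set V}}) (k : nat)
  (M : {set {set V}}) (Delta : {set V}) :
  is_simplicial_complex L ->
  is_kcycle L k M ->
  Delta \in M ->
  star_condition M Delta ->
  is_cycle2 (Omega M Delta k).
Proof.
(* Neither the complex L nor Delta \in M plays a role. *)
move=> _ [_ [card_M even_star_M]] _ star c'.
have [-> | [c0]] := set_0Vmem [set c in Omega M Delta k | is_bface c' c].
  by rewrite cards0.
rewrite inE => /andP [c0_Omega /(bface_Omega c0_Omega)].
case=> x [rho [tau [x_rho rho_neq0 pair0 _ ->]]].
rewrite (cofaces_Omega x_rho rho_neq0 pair0) card_in_imset; last exact: coface_inj.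
exact: (coface_vertices_even card_M even_star_M star x_rho rho_neq0 pair0).
Qed.
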